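(* Let $V$ be a Poisson algebra over $\Bbbk$ with product $ab$ and bracket $[a,b]$, let $D$ be a derivation of $V$ (of both the product and the bracket), and let $V[t,t^{-1}]$ be the commutative algebra of Laurent polynomials over $V$. Then the bilinear map defined by $$[at^n,bt^m]=[a,b]t^{n+m}+\big(naD(b)-mbD(a)\big)t^{n+m-1},\qquad a,b\in V,\ n,m\in\mathbb Z,$$ is a Poisson bracket on $V[t,t^{-1}]$ (together with the usual commutative multiplication of Laurent polynomials).
   Context: $\Bbbk$ is a field of characteristic $0$. A Poisson algebra is a commutative associative algebra with a Lie bracket satisfying $[a,bc]=[a,b]c+b[a,c]$. *)

From HB Require Import structures.
From mathcomp Require Import all_boot all_order all_algebra.
Set Implicit Arguments. Unset Strict Implicit. Unset Printing Implicit Defensive.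
Import Order.TTheory GRing.Theory Num.Theory.
Local Open Scope ring_scope.

Section Poisson.
Variables (k : fieldType) (V : lmodType k).

Definition bilinear_op (f : V -> V -> V) : Prop :=
  (forall (c : k) (x y z : V), f (c *: x + y) z = c *: f x z + f y z) /\
  (forall (c : k) (x y z : V), f z (c *: x + y) = c *: f z x + f z y).

Definition is_poisson (mul br : V -> V -> V) : Prop :=
  bilinear_op mul /\
  (forall a b c, mul a (mul b c) = mul (mul a b) c) /\
  (forall a b, mul a b = mul b a) /\
  bilinear_op br /\
  (forall a, br a a = 0) /\
  (forall a b c, br a (br b c) + br b (br c a) + br c (br a b) = 0) /\
  (forall a b c, br a (mul b c) = mul (br a b) c + mul b (br a c)).

Definition is_poisson_derivation (mul br : V -> V -> V) (D : V -> V) : Prop :=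
  [/\ (forall (c : k) x y, D (c *: x + y) = c *: D x + D y),
      (forall a b, D (mul a b) = mul (D a) b + mul a (D b))
    & (forall a b, D (br a b) = br (D a) b + br a (D b))].

(* Laurent polynomials V[t,t^-1]: an element is represented by a finite formal
   sum of monomials a t^n, given as a list of pairs (a, n); two representatives
   denote the same Laurent polynomial iff all their coefficients agree. *)
Definition laurent := seq (V * int).

Definition lcoef (p : laurent) (n : int) : V := \sum_(x <- p | x.2 == n) x.1.

Definition leq_laurent (p q : laurent) : Prop := forall n, lcoef p n = lcoef q n.

Definition ladd (p q : laurent) : laurent := p ++ q.
Definition lscale (c : k) (p : laurent) : laurent := [seq (c *: x.1, x.2) | x <- p].
Definition lzero : laurent := [::].

Definition lmul (mul : V -> V -> V) (p q : laurent) : laurent :=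
  [seq (mul x.1 y.1, x.2 + y.2) | x <- p, y <- q].

Definition lbr_mono (mul br : V -> V -> V) (D : V -> V) (x y : V * int) : laurent :=
  [:: (br x.1 y.1, x.2 + y.2);
      ((mul x.1 (D y.1)) *~ x.2 - (mul y.1 (D x.1)) *~ y.2, x.2 + y.2 - 1)].

Definition lbr (mul br : V -> V -> V) (D : V -> V) (p q : laurent) : laurent :=
  flatten [seq lbr_mono mul br D x y | x <- p, y <- q].

End Poisson.

(* The bracket is given on representatives, so everything is checked on
   coefficients: the coefficient of t^n in the bracket of two representatives is
   a double sum, over pairs of their monomials, of the coefficient of t^n in the
   bracket of two monomials.  This is additive in the coefficient of each
   monomial, so monomials can be regrouped by exponent, which gives
   well-definedness; bilinearity and alternation are then immediate.  The
   Leibniz rule and the Jacobi identity reduce to identities between three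
   monomials a t^i, b t^j, c t^l, whose terms have degree i + j + l - d with
   d in {0, 1, 2}.  For d = 0 these are the Leibniz rule and the Jacobi identity
   of V; for d = 1, 2 they are integer linear relations between products of
   a, b, c and their images under D and D^2, which follow from D being a
   derivation of both operations. *)

From mathcomp Require Import all_boot all_order all_algebra.
From mathcomp Require Import ring.
Import GRing.Theory.
Local Open Scope ring_scope.
Set Implicit Arguments. Unset Strict Implicit. Unset Printing Implicit Defensive.

Section IntCombination.
Variable W : zmodType.

Definition zcomb (xs : seq W) (f : nat -> int) : W := \sum_(i < size xs) xs`_i *~ f i.

Lemma zcombD xs f g : zcomb xs f + zcomb xs g = zcomb xs (fun i => f i + g i).
Proof. by rewrite /zcomb -big_split; apply: eq_bigr => i _; rewrite mulrzDr. Qed.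

Lemma zcombN xs f : - zcomb xs f = zcomb xs (fun i => - f i).
Proof. by rewrite /zcomb -sumrN; apply: eq_bigr => i _; rewrite mulrNz. Qed.

Lemma zcombMz xs f c : zcomb xs f *~ c = zcomb xs (fun i => f i * c).
Proof. by rewrite /zcomb mulrz_suml; apply: eq_bigr => i _; rewrite mulrzA. Qed.

Lemma zcomb_atom xs i c :
  (i < size xs)%N -> xs`_i *~ c = zcomb xs (fun m => if m == i then c else 0).
Proof.
move=> lt_i; rewrite /zcomb (bigD1 (Ordinal lt_i)) //= eqxx big1 ?addr0 // => j.
by rewrite -val_eqE /= => /negbTE ->.
Qed.

Lemma zcomb_eq0 xs f : (forall i, (i < size xs)%N -> f i = 0) -> zcomb xs f = 0.
Proof. by move=> f0; rewrite /zcomb big1 // => i _; rewrite f0. Qed.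

End IntCombination.

Ltac zcomb_atoms xs atoms i :=
  lazymatch atoms with
  | ?t :: ?atoms' =>
      let E := fresh in
      have E : forall c, t *~ c = zcomb xs (fun m => if m == i then c else 0) :=
        fun c => @zcomb_atom _ xs i c isT;
      rewrite ?E {E}; zcomb_atoms xs atoms' (S i)
  | _ => idtac
  end.

Ltac zcomb_coefs i atoms :=
  lazymatch atoms with
  | _ :: ?atoms' => case: i => [_ /=|i]; [ring | zcomb_coefs i atoms']
  | _ => by []
  end.

(* Proves [e = 0] for an integer combination [e] of the given atoms by
   comparing, in [int], the coefficients of each atom. *)
Ltac zlinear atoms :=
  let xs := fresh "xs" in
  set xs := atoms;
  rewrite ?mulrzDl ?mulrzBl ?mulNrz;
  zcomb_atoms xs atoms 0%N;
  rewrite ?(zcombN, zcombMz, zcombD);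
  apply: zcomb_eq0; let i := fresh "i" in move=> i; rewrite {}/xs;
  zcomb_coefs i atoms.

Section LinearMap.
Variables (R : pzRingType) (V : lmodType R) (g : V -> V).
Hypothesis g_lin : forall (c : R) x y, g (c *: x + y) = c *: g x + g y.

Lemma lmapD x y : g (x + y) = g x + g y.
Proof. by have := g_lin 1 x y; rewrite !scale1r. Qed.

Lemma lmap0 : g 0 = 0.
Proof. by apply: (addrI (g 0)); rewrite -lmapD !addr0. Qed.

Lemma lmapZ c x : g (c *: x) = c *: g x.
Proof. by have := g_lin c x 0; rewrite !addr0 lmap0 addr0. Qed.

Lemma lmapN x : g (- x) = - g x.
Proof. by rewrite -scaleN1r lmapZ scaleN1r. Qed.

Lemma lmapB x y : g (x - y) = g x - g y.
Proof. by rewrite lmapD lmapN. Qed.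

Lemma lmapMz x (i : int) : g (x *~ i) = g x *~ i.
Proof. by rewrite -!scaler_int lmapZ. Qed.

End LinearMap.

Section BilinearOp.
Variables (k : fieldType) (V : lmodType k) (f : V -> V -> V).
Hypothesis f_bil : bilinear_op f.

Let linl z : forall (c : k) x y, f (c *: x + y) z = c *: f x z + f y z :=
  fun c x y => f_bil.1 c x y z.
Let linr z : forall (c : k) x y, f z (c *: x + y) = c *: f z x + f z y :=
  fun c x y => f_bil.2 c x y z.

Lemma bilinDl x y z : f (x + y) z = f x z + f y z.
Proof. exact: (lmapD (g := f^~ z) (linl z)). Qed.

Lemma bilinDr x y z : f z (x + y) = f z x + f z y.
Proof. exact: (lmapD (g := f z) (linr z)). Qed.

Lemma bilinZl c x z : f (c *: x) z = c *: f x z.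
Proof. exact: (lmapZ (g := f^~ z) (linl z)). Qed.

Lemma bilinZr c x z : f z (c *: x) = c *: f z x.
Proof. exact: (lmapZ (g := f z) (linr z)). Qed.

Lemma bilinNl x z : f (- x) z = - f x z.
Proof. exact: (lmapN (g := f^~ z) (linl z)). Qed.

Lemma bilinNr x z : f z (- x) = - f z x.
Proof. exact: (lmapN (g := f z) (linr z)). Qed.

Lemma bilinBl x y z : f (x - y) z = f x z - f y z.
Proof. exact: (lmapB (g := f^~ z) (linl z)). Qed.

Lemma bilinBr x y z : f z (x - y) = f z x - f z y.
Proof. exact: (lmapB (g := f z) (linr z)). Qed.

Lemma bilinMzl x z i : f (x *~ i) z = f x z *~ i.
Proof. exact: (lmapMz (g := f^~ z) (linl z)). Qed.

Lemma bilinMzr x z i : f z (x *~ i) = f z x *~ i.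
Proof. exact: (lmapMz (g := f z) (linr z)). Qed.

Definition bilinE :=
  (bilinDl, bilinDr, bilinBl, bilinBr, bilinNl, bilinNr, bilinMzl, bilinMzr).

End BilinearOp.

Section LaurentCoefficients.
Variables (k : fieldType) (V : lmodType k).
Implicit Types (p q : laurent V) (n : int).

Definition mcoef n (z : V * int) : V := z.1 *+ (z.2 == n).

Lemma mcoefD n v v' e : mcoef n (v + v', e) = mcoef n (v, e) + mcoef n (v', e).
Proof. exact: mulrnDl. Qed.

Lemma mcoefZ n c v e : mcoef n (c *: v, e) = c *: mcoef n (v, e).
Proof. by rewrite /mcoef /=; case: (_ == _); rewrite ?scaler0. Qed.

Lemma lcoefE p n : lcoef p n = \sum_(z <- p) mcoef n z.
Proof. by rewrite /lcoef big_mkcond; apply: eq_bigr => z _; rewrite /mcoef mulrb. Qed.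

Lemma lcoef_add p q n : lcoef (ladd p q) n = lcoef p n + lcoef q n.
Proof. exact: big_cat. Qed.

Lemma lcoef_scale c p n : lcoef (lscale c p) n = c *: lcoef p n.
Proof.
rewrite !lcoefE big_map scaler_sumr.
by apply: eq_bigr => -[v e] _; rewrite mcoefZ.
Qed.

Lemma lcoef_zero n : lcoef (lzero V) n = 0.
Proof. exact: big_nil. Qed.

Lemma sum_lcoef (W : zmodType) (G : V -> int -> W) p (s : seq int) :
  (forall a b i, G (a + b) i = G a i + G b i) -> uniq s ->
  {subset [seq z.2 | z <- p] <= s} ->
  \sum_(z <- p) G z.1 z.2 = \sum_(i <- s) G (lcoef p i) i.
Proof.
move=> GD s_uniq; have G0 i : G 0 i = 0.
  by apply: (addrI (G 0 i)); rewrite -GD !addr0.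
elim: p => [_|z p IHp sub_zp].
  by rewrite big_nil big1_seq // => i _; rewrite /lcoef big_nil G0.
rewrite big_cons IHp; last by move=> x px; apply: sub_zp; rewrite inE px orbT.
have zs : z.2 \in s by apply: sub_zp; rewrite inE eqxx.
under [in RHS]eq_bigr do rewrite lcoefE big_cons -lcoefE GD.
rewrite big_split /=; congr (_ + _).
rewrite (bigD1_seq z.2) //= /mcoef eqxx mulr1n big1 ?addr0 // => i.
by rewrite eq_sym => /negbTE ->; rewrite mulr0n G0.
Qed.

Variables (mul br : V -> V -> V) (D : V -> V).

Definition Dbracket (x y : V * int) : V :=
  mul x.1 (D y.1) *~ x.2 - mul y.1 (D x.1) *~ y.2.

Lemma lcoef_lbr_mono n x y : lcoef (lbr_mono mul br D x y) n =
  mcoef n (br x.1 y.1, x.2 + y.2) + mcoef n (Dbracket x y, x.2 + y.2 - 1).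
Proof. by rewrite lcoefE !big_cons big_nil addr0. Qed.

Lemma sum_lbr (W : zmodType) (F : V * int -> W) p q :
  \sum_(z <- lbr mul br D p q) F z =
  \sum_(x <- p) \sum_(y <- q) \sum_(z <- lbr_mono mul br D x y) F z.
Proof. by rewrite big_flatten big_allpairs_dep. Qed.

Lemma sum_lmul (W : zmodType) (F : V * int -> W) p q :
  \sum_(z <- lmul mul p q) F z =
  \sum_(x <- p) \sum_(y <- q) F (mul x.1 y.1, x.2 + y.2).
Proof. exact: big_allpairs_dep. Qed.

Lemma lcoef_lbr p q n : lcoef (lbr mul br D p q) n =
  \sum_(x <- p) \sum_(y <- q) lcoef (lbr_mono mul br D x y) n.
Proof.
by rewrite lcoefE sum_lbr; under eq_bigr do under eq_bigr do rewrite -lcoefE.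
Qed.

End LaurentCoefficients.

Lemma sum_antisym (W : zmodType) (T : Type) (F : T -> T -> W) (s : seq T) :
  (forall x y, F x y = - F y x) -> (forall x, F x x = 0) ->
  \sum_(x <- s) \sum_(y <- s) F x y = 0.
Proof.
move=> Fanti Fdiag; elim: s => [|z s IHs]; first by rewrite big_nil.
rewrite big_cons big_cons Fdiag add0r.
under [X in _ + X]eq_bigr do rewrite big_cons.
rewrite big_split /= IHs addr0 -[X in _ + X]opprK -sumrN.
by under [X in _ - X]eq_bigr do rewrite -Fanti; rewrite subrr.
Qed.

Lemma exchange_big3 (W : zmodType) (T1 T2 T3 : Type) (F : T1 -> T2 -> T3 -> W)
    (s1 : seq T1) (s2 : seq T2) (s3 : seq T3) :
  \sum_(x <- s1) \sum_(y <- s2) \sum_(z <- s3) F x y z =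
  \sum_(z <- s3) \sum_(x <- s1) \sum_(y <- s2) F x y z.
Proof. by under eq_bigr do rewrite exchange_big; rewrite exchange_big. Qed.

Lemma exponent_shift (e n N d : int) : e = N - d -> (e == n) = (N - n == d).
Proof. by move->; apply/eqP/eqP => <-; ring. Qed.

Lemma int_neq012 :
  ((0 == 1 :> int) = false) * ((0 == 2 :> int) = false) * ((1 == 0 :> int) = false) *
  ((1 == 2 :> int) = false) * ((2 == 0 :> int) = false) * ((2 == 1 :> int) = false).
Proof. by []. Qed.

(* Rewrites every test [e == n] with [e = N - d], d in {0, 1, 2}, into [N - n == d]. *)
Ltac shift_exponents N n :=
  repeat match goal with |- context[?e == n] =>
    first [ rewrite (@exponent_shift e n N 0 ltac:(ring))
          | rewrite (@exponent_shift e n N 1 ltac:(ring))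
          | rewrite (@exponent_shift e n N 2 ltac:(ring)) ] end.

Ltac shift_cases d :=
  have [?|_] := eqVneq d (0 : int);
  [subst d | have [?|_] := eqVneq d (1 : int);
     [subst d | have [?|_] := eqVneq d (2 : int); [subst d |]]];
  rewrite ?eqxx ?int_neq012 ?mulr1n ?mulr0n ?addr0 ?add0r ?subr0 ?sub0r ?oppr0.

Section PoissonLaurent.
Variables (k : fieldType) (V : lmodType k) (mul br : V -> V -> V) (D : V -> V).
Hypotheses (HP : is_poisson mul br) (HD : is_poisson_derivation mul br D).

Let mul_bil : bilinear_op mul. Proof. by case: HP. Qed.
Let br_bil : bilinear_op br. Proof. by case: HP => _ [_ [_ []]]. Qed.
Let mulA a b c : mul a (mul b c) = mul (mul a b) c. Proof. by case: HP => _ []. Qed.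
Let mulC a b : mul a b = mul b a. Proof. by case: HP => _ [_ []]. Qed.
Let brxx a : br a a = 0. Proof. by case: HP => _ [_ [_ [_ []]]]. Qed.
Let jacobi a b c : br a (br b c) + br b (br c a) + br c (br a b) = 0.
Proof. by case: HP => _ [_ [_ [_ [_ []]]]]. Qed.
Let leibniz a b c : br a (mul b c) = mul (br a b) c + mul b (br a c).
Proof. by case: HP => _ [_ [_ [_ [_ []]]]]. Qed.
Let D_lin c x y : D (c *: x + y) = c *: D x + D y. Proof. by case: HD. Qed.
Let derM a b : D (mul a b) = mul (D a) b + mul a (D b). Proof. by case: HD. Qed.
Let derBr a b : D (br a b) = br (D a) b + br a (D b). Proof. by case: HD. Qed.

Lemma brC a b : br a b = - br b a.
Proof.
apply/eqP; rewrite -addr_eq0; apply/eqP.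
by have := brxx (a + b); rewrite (bilinDl br_bil) !(bilinDr br_bil) !brxx add0r addr0.
Qed.

Lemma mulCA a b c : mul a (mul b c) = mul b (mul a c).
Proof. by rewrite !mulA (mulC a). Qed.

(* A rewrite multirule putting triple products in the form [mul a (mul b c)]. *)
Lemma mul3_perm a b c :
  (mul a (mul c b) = mul a (mul b c)) * (mul b (mul a c) = mul a (mul b c)) *
  (mul b (mul c a) = mul a (mul b c)) * (mul c (mul a b) = mul a (mul b c)) *
  (mul c (mul b a) = mul a (mul b c)).
Proof.
do !split; first by rewrite (mulC c).
- exact: mulCA.
- by rewrite (mulC c) mulCA.
- by rewrite mulCA (mulC c).
- by rewrite mulCA (mulC c) mulCA.
Qed.

Implicit Types (p q : laurent V) (n : int).

Local Notation LB := (lbr mul br D).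
Local Notation brc n x y := (lcoef (lbr_mono mul br D x y) n).

Lemma brcDl n a a' i y : brc n (a + a', i) y = brc n (a, i) y + brc n (a', i) y.
Proof.
rewrite !lcoef_lbr_mono /Dbracket /= (bilinDl br_bil) (lmapD D_lin) (bilinDl mul_bil).
rewrite (bilinDr mul_bil) !mulrzDl opprD !mcoefD.
by rewrite [RHS]addrACA [X in _ = _ + X]addrACA.
Qed.

Lemma brcDr n b b' j x : brc n x (b + b', j) = brc n x (b, j) + brc n x (b', j).
Proof.
rewrite !lcoef_lbr_mono /Dbracket /= (bilinDr br_bil) (lmapD D_lin) (bilinDr mul_bil).
rewrite (bilinDl mul_bil) !mulrzDl opprD !mcoefD.
by rewrite [RHS]addrACA [X in _ = _ + X]addrACA.
Qed.

Lemma brcZl n c a i y : brc n (c *: a, i) y = c *: brc n (a, i) y.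
Proof.
rewrite !lcoef_lbr_mono /Dbracket /= (bilinZl br_bil) (lmapZ D_lin) (bilinZl mul_bil).
by rewrite (bilinZr mul_bil) !scalerMzr -scalerBr !mcoefZ scalerDr.
Qed.

Lemma brcZr n c b j x : brc n x (c *: b, j) = c *: brc n x (b, j).
Proof.
rewrite !lcoef_lbr_mono /Dbracket /= (bilinZr br_bil) (lmapZ D_lin) (bilinZr mul_bil).
by rewrite (bilinZl mul_bil) !scalerMzr -scalerBr !mcoefZ scalerDr.
Qed.

Lemma brcC n x y : brc n x y = - brc n y x.
Proof.
rewrite !lcoef_lbr_mono /Dbracket /mcoef /= [y.2 + _]addrC (brC y.1) opprD -!mulNrn.
by rewrite opprB opprK.
Qed.

Lemma brcxx n x : brc n x x = 0.
Proof. by rewrite lcoef_lbr_mono /Dbracket /mcoef /= brxx subrr !mul0rn addr0. Qed.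

Lemma lcoef_lbr_regroup p q n (s t : seq int) : uniq s -> uniq t ->
  {subset [seq z.2 | z <- p] <= s} -> {subset [seq z.2 | z <- q] <= t} ->
  lcoef (LB p q) n = \sum_(i <- s) \sum_(j <- t) brc n (lcoef p i, i) (lcoef q j, j).
Proof.
move=> s_uniq t_uniq sub_p sub_q; rewrite lcoef_lbr.
pose G a i := \sum_(y <- q) brc n (a, i) y.
transitivity (\sum_(x <- p) G x.1 x.2); first by apply: eq_bigr => -[a i].
have G_add a a' i : G (a + a') i = G a i + G a' i.
  by rewrite -big_split; apply: eq_bigr => y _; rewrite brcDl.
rewrite (sum_lcoef G_add s_uniq sub_p); apply: eq_bigr => i _.
pose H b j := brc n (lcoef p i, i) (b, j).
have H_add b b' j : H (b + b') j = H b j + H b' j by rewrite /H brcDr.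
transitivity (\sum_(y <- q) H y.1 y.2); first by apply: eq_bigr => -[b j].
exact: sum_lcoef H_add t_uniq sub_q.
Qed.

Lemma eq_lbr p p' q q' : leq_laurent p p' -> leq_laurent q q' ->
  leq_laurent (LB p q) (LB p' q').
Proof.
move=> eq_p eq_q n.
pose exps (r : laurent V) := [seq z.2 | z <- r].
have sub_l (r r' : laurent V) : {subset exps r <= undup (exps (r ++ r'))}.
  by move=> e e_r; rewrite mem_undup /exps map_cat mem_cat e_r.
have sub_r (r r' : laurent V) : {subset exps r' <= undup (exps (r ++ r'))}.
  by move=> e e_r; rewrite mem_undup /exps map_cat mem_cat e_r orbT.
rewrite (lcoef_lbr_regroup n (undup_uniq _) (undup_uniq _) (sub_l p p') (sub_l q q')).
rewrite (lcoef_lbr_regroup n (undup_uniq _) (undup_uniq _) (sub_r p p') (sub_r q q')).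
by apply: eq_bigr => i _; apply: eq_bigr => j _; rewrite eq_p eq_q.
Qed.

Lemma lbr_linearl c p p' q :
  leq_laurent (LB (ladd (lscale c p) p') q) (ladd (lscale c (LB p q)) (LB p' q)).
Proof.
move=> n; rewrite lcoef_add lcoef_scale !lcoef_lbr big_cat big_map scaler_sumr.
congr (_ + _); apply: eq_bigr => -[a i] _.
by rewrite scaler_sumr; apply: eq_bigr => y _; rewrite brcZl.
Qed.

Lemma lbr_linearr c p p' q :
  leq_laurent (LB q (ladd (lscale c p) p')) (ladd (lscale c (LB q p)) (LB q p')).
Proof.
move=> n; rewrite lcoef_add lcoef_scale !lcoef_lbr scaler_sumr -big_split.
apply: eq_bigr => x _; rewrite big_cat big_map scaler_sumr; congr (_ + _).
by apply: eq_bigr => -[b j] _; rewrite brcZr.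
Qed.

Lemma lbrxx p : leq_laurent (LB p p) (lzero V).
Proof.
move=> n; rewrite lcoef_zero lcoef_lbr.
by apply: sum_antisym => [x y|x]; [exact: brcC | exact: brcxx].
Qed.

Lemma brc_leibniz n (a b c : V) (i j l : int) :
  brc n (a, i) (mul b c, j + l) =
    \sum_(z <- lbr_mono mul br D (a, i) (b, j)) mcoef n (mul z.1 c, z.2 + l) +
    \sum_(z <- lbr_mono mul br D (a, i) (c, l)) mcoef n (mul b z.1, j + z.2).
Proof.
rewrite lcoef_lbr_mono !big_cons !big_nil !addr0 /mcoef /Dbracket /=.
apply: subr0_eq.
shift_exponents (i + j + l) n; move: (i + j + l - n) => d.
shift_cases d; [by rewrite leibniz subrr | | by [] | by []].
rewrite derM ?(bilinE mul_bil) -?mulA.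
rewrite ?(mul3_perm a (D b) c) ?(mul3_perm a b (D c)) ?(mul3_perm (D a) b c).
zlinear [:: mul a (mul (D b) c); mul a (mul b (D c)); mul (D a) (mul b c)].
Qed.

Lemma lbr_leibniz p q r :
  leq_laurent (LB p (lmul mul q r)) (ladd (lmul mul (LB p q) r) (lmul mul q (LB p r))).
Proof.
move=> n; rewrite lcoef_add lcoef_lbr !lcoefE !sum_lmul !sum_lbr.
under eq_bigr do rewrite sum_lmul.
under [X in _ = _ + X]eq_bigr do rewrite sum_lbr.
rewrite [X in _ = _ + X]exchange_big -big_split; apply: eq_bigr => -[a i] _ /=.
rewrite -big_split; apply: eq_bigr => -[b j] _ /=.
rewrite exchange_big -big_split; apply: eq_bigr => -[c l] _ /=.
exact: brc_leibniz.
Qed.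

Lemma brc_jacobi n (a b c : V) (i j l : int) :
  \sum_(z <- lbr_mono mul br D (b, j) (c, l)) brc n (a, i) z +
  \sum_(z <- lbr_mono mul br D (c, l) (a, i)) brc n (b, j) z +
  \sum_(z <- lbr_mono mul br D (a, i) (b, j)) brc n (c, l) z = 0.
Proof.
rewrite !big_cons !big_nil !addr0 !lcoef_lbr_mono /mcoef /Dbracket /=.
shift_exponents (i + j + l) n; move: (i + j + l - n) => d.
shift_cases d.
- exact: jacobi.
- rewrite !derBr ?(bilinE mul_bil) ?(bilinE br_bil) !leibniz.
  rewrite ?(bilinE mul_bil) ?(bilinE br_bil) ?[mul _ (br _ _)]mulC.
  rewrite (brC (D b) c) (brC (D c) a) (brC (D a) b) (brC b a) (brC a c) (brC c b).
  rewrite ?(bilinE mul_bil).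
  zlinear [:: mul (br a b) (D c); mul (br b c) (D a); mul (br c a) (D b);
    mul (br a (D b)) c; mul (br a (D c)) b; mul (br b (D a)) c;
    mul (br b (D c)) a; mul (br c (D a)) b; mul (br c (D b)) a].
- rewrite ?(lmapMz D_lin, lmapB D_lin, derM) ?(bilinE mul_bil) -?mulA.
  rewrite ?(mul3_perm a (D b) (D c)) ?(mul3_perm b (D a) (D c)) ?(mul3_perm c (D a) (D b)).
  rewrite ?(mul3_perm a b (D (D c))) ?(mul3_perm b c (D (D a))) ?(mul3_perm c a (D (D b))).
  zlinear [:: mul a (mul (D b) (D c)); mul b (mul (D a) (D c)); mul c (mul (D a) (D b));
    mul a (mul b (D (D c))); mul b (mul c (D (D a))); mul c (mul a (D (D b)))].
- by [].
Qed.

Lemma lbr_jacobi p q r :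
  leq_laurent (ladd (ladd (LB p (LB q r)) (LB q (LB r p))) (LB r (LB p q))) (lzero V).
Proof.
move=> n; have lcoef_nested p1 q1 r1 : lcoef (LB p1 (LB q1 r1)) n =
    \sum_(x <- p1) \sum_(y <- q1) \sum_(w <- r1)
      \sum_(z <- lbr_mono mul br D y w) brc n x z.
  by rewrite lcoef_lbr; apply: eq_bigr => x _; rewrite sum_lbr.
rewrite !lcoef_add lcoef_zero !lcoef_nested.
rewrite [X in _ + X + _]exchange_big3 -[X in _ + X]exchange_big3 -!big_split big1 //.
move=> [a i] _; rewrite -!big_split big1 // => -[b j] _.
by rewrite -!big_split big1 // => -[c l] _; apply: brc_jacobi.
Qed.

End PoissonLaurent.

Theorem mainTheorem4 (k : fieldType) (V : lmodType k)
    (mul br : V -> V -> V) (D : V -> V) :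
  [pchar k] =i pred0 ->
  is_poisson mul br ->
  is_poisson_derivation mul br D ->
  let LB := lbr mul br D in
  let LM := lmul mul in
      (forall p p' q q' : laurent V, leq_laurent p p' -> leq_laurent q q' ->
         leq_laurent (LB p q) (LB p' q')) /\
      (forall (c : k) (p p' q : laurent V),
         leq_laurent (LB (ladd (lscale c p) p') q) (ladd (lscale c (LB p q)) (LB p' q))) /\
      (forall (c : k) (p p' q : laurent V),
         leq_laurent (LB q (ladd (lscale c p) p')) (ladd (lscale c (LB q p)) (LB q p'))) /\
      (forall p : laurent V, leq_laurent (LB p p) (lzero V)) /\
      (forall p q r : laurent V,
         leq_laurent (ladd (ladd (LB p (LB q r)) (LB q (LB r p))) (LB r (LB p q)))
                     (lzero V)) /\
      (forall p q r : laurent V,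
         leq_laurent (LB p (LM q r)) (ladd (LM (LB p q) r) (LM q (LB p r)))).
Proof.
move=> _ HP HD LB LM.
split; first exact: eq_lbr HP HD.
split; first exact: lbr_linearl HP HD.
split; first exact: lbr_linearr HP HD.
split; first exact: lbrxx HP.
split; first exact: lbr_jacobi HP HD.
exact: lbr_leibniz HP HD.
Qed.
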